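(* For all integers $n\ge 2$, $$(n+1)\,b_n=(n-1)\left(2b_{n-1}+3b_{n-2}\right).$$
   Context: Let $X(\theta)=1+2\cos\theta$ and, for $k\ge 0$, $\chi_k(\theta)=1+2\sum_{j=1}^{k}\cos(j\theta)$ (the character of the $(k+1)$-dimensional irreducible representation of the Lie algebra $A_1$). For $n\ge 0$ the integers $b_n^{(k)}$, $0\le k\le n$, are the unique coefficients with $X(\theta)^n=\sum_{k=0}^{n}b_n^{(k)}\chi_k(\theta)$ for all real $\theta$. Write $b_n=b_n^{(0)}$. *)

From Stdlib Require Import Reals ZArith.
Open Scope R_scope.

Definition Xfun (t : R) : R := 1 + 2 * cos t.

Fixpoint cos_sum (k : nat) (t : R) : R :=
  match k with
  | O => 0
  | S k' => cos_sum k' t + cos (INR (S k') * t)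
  end.

Definition chi (k : nat) (t : R) : R := 1 + 2 * cos_sum k t.

(* b : nat -> nat -> Z gives the coefficients b_n^(k) of the decomposition
   X(theta)^n = sum_{k=0}^{n} b_n^(k) chi_k(theta) for all real theta.
   (sum_f_R0 f n = f 0 + ... + f n.) *)
Definition is_char_decomp (b : nat -> nat -> Z) : Prop :=
  forall (n : nat) (t : R),
    Xfun t ^ n = sum_f_R0 (fun k => IZR (b n k) * chi k t) n.

(* The constant coefficient b_n = b_n^(0) is extracted by integration against
   the weight w(t) = 1 - cos t on [0, PI]:  since
     int_0^PI cos(j t) w(t) dt = PI, -PI/2, 0   for j = 0, 1, >= 2,
   every character chi_k = 1 + 2 (cos t + ... + cos kt) with k >= 1 has
   weighted integral 0, while chi_0 = 1 has weighted integral PI.  Hence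
     int_0^PI X(t)^n w(t) dt = PI * b_n.                                    (M)
   On the other hand, a direct computation shows that
     d/dt [ X^(m+1) (2 sin t - sin 2t) ]
       = ((m+3) X^(m+2) - (m+1) (2 X^(m+1) + 3 X^m)) w,
   and the bracket vanishes at 0 and PI, so this combination has weighted
   integral 0.  Comparing with (M) by linearity of the integral gives
   (m+3) b_(m+2) = (m+1) (2 b_(m+1) + 3 b_m), which is the theorem with n = m+2.
   The file first collects integration tools, then proves (M) through the
   orthogonality relations, then the derivative identity, and finally the
   recurrence. *)
From Coquelicot Require Import Coquelicot.
From Stdlib Require Import Reals Lra Lia ZArith Nsatz.
Open Scope R_scope.

(* Fundamental theorem of calculus for an everywhere differentiable
   antiderivative whose derivative is itself differentiable (hence continuous). *)
Lemma is_RInt_antiderivative (F f : R -> R) (a b v : R) :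
  (forall x, is_derive F x (f x)) -> (forall x, ex_derive f x) ->
  F b - F a = v -> is_RInt f a b v.
Proof.
  intros HF Hf <-.
  apply (is_RInt_derive F f a b); intros x _; [apply HF |].
  apply (ex_derive_continuous (K := R_AbsRing) (V := R_NormedModule)), Hf.
Qed.

(* Linearity of is_RInt, phrased with a free value so that it can be
   chained without first normalising the resulting expression. *)
Lemma is_RInt_plus_eq (f g : R -> R) (a b u v w : R) :
  is_RInt f a b u -> is_RInt g a b v -> u + v = w ->
  is_RInt (fun t => f t + g t) a b w.
Proof. intros Hf Hg <-. exact (is_RInt_plus f g a b u v Hf Hg). Qed.

Lemma is_RInt_scal_eq (f : R -> R) (a b k u w : R) :
  is_RInt f a b u -> k * u = w -> is_RInt (fun t => k * f t) a b w.
Proof. intros Hf <-. exact (is_RInt_scal f a b k u Hf). Qed.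

Lemma is_RInt_ext_eq (f g : R -> R) (a b v : R) :
  (forall t, f t = g t) -> is_RInt f a b v -> is_RInt g a b v.
Proof. intros H. apply is_RInt_ext. intros t _. apply H. Qed.

Lemma sin_INR_mult_PI (j : nat) : sin (INR j * PI) = 0.
Proof.
  induction j as [|j IH]; [simpl; rewrite Rmult_0_l; apply sin_0 |].
  rewrite S_INR, Rmult_plus_distr_r, Rmult_1_l, neg_sin, IH. ring.
Qed.

(* The weight under which the characters become orthogonal to the constants. *)
Definition weight (t : R) : R := 1 - cos t.

Definition cos_moment (j : nat) : R :=
  match j with O => PI | 1%nat => - (PI / 2) | _ => 0 end.

Lemma is_RInt_cos_weight (j : nat) :
  is_RInt (fun t => cos (INR j * t) * weight t) 0 PI (cos_moment j).
Proof.
  unfold weight; destruct j as [|[|m]].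
  - apply (is_RInt_antiderivative (fun t => t - sin t));
      [intros x; auto_derive; auto; simpl; rewrite Rmult_0_l, cos_0; ring
      | intros x; auto_derive; auto
      | simpl; rewrite sin_PI, sin_0; ring].
  - apply (is_RInt_antiderivative (fun t => sin t - (t + sin t * cos t) / 2)).
    + intros x; auto_derive; auto; simpl; rewrite (Rmult_1_l x).
      pose proof (sin2_cos2 x) as Hsc; unfold Rsqr in Hsc; nra.
    + intros x; auto_derive; auto.
    + simpl; rewrite sin_PI, sin_0, cos_PI, cos_0; field.
  - set (J := INR (S (S m))).
    assert (HJ : J > 1) by (unfold J; rewrite !S_INR; pose proof (pos_INR m); lra).
    apply (is_RInt_antiderivative (fun t => sin (J * t) / J
       - (J * sin (J * t) * cos t - sin t * cos (J * t)) / (J * J - 1))).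
    + intros x; auto_derive; auto; simpl; field; split; nra.
    + intros x; auto_derive; auto.
    + simpl; unfold J; rewrite sin_INR_mult_PI, !Rmult_0_r, sin_0, sin_PI.
      fold J; field; split; nra.
Qed.

Lemma is_RInt_chi_weight (k : nat) :
  is_RInt (fun t => chi k t * weight t) 0 PI (match k with O => PI | _ => 0 end).
Proof.
  assert (Hsum : is_RInt (fun t => cos_sum k t * weight t) 0 PI
                   (match k with O => 0 | _ => - (PI / 2) end)).
  { induction k as [|k IH].
    - apply (is_RInt_ext_eq (fun _ => 0)); [intros t; simpl; ring |].
      apply (is_RInt_antiderivative (fun _ => 0));
        [intros x; auto_derive; auto | intros x; auto_derive; auto | ring].
    - apply (is_RInt_ext_eq (fun t => cos_sum k t * weight t
                                   + cos (INR (S k) * t) * weight t));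
        [intros t; simpl; ring |].
      eapply is_RInt_plus_eq; [apply IH | apply is_RInt_cos_weight |].
      destruct k; simpl; ring. }
  apply (is_RInt_ext_eq (fun t => cos (INR 0 * t) * weight t
                                + 2 * (cos_sum k t * weight t))).
  { intros t; unfold chi; simpl; rewrite Rmult_0_l, cos_0; ring. }
  eapply is_RInt_plus_eq; [apply (is_RInt_cos_weight 0) |
    eapply is_RInt_scal_eq; [apply Hsum | reflexivity] |].
  destruct k; simpl; field.
Qed.

Lemma is_RInt_expansion_weight (a : nat -> R) (m : nat) :
  is_RInt (fun t => sum_f_R0 (fun k => a k * chi k t) m * weight t) 0 PI
          (PI * a 0%nat).
Proof.
  induction m as [|m IH].
  - apply (is_RInt_ext_eq (fun t => a 0%nat * (chi 0 t * weight t)));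
      [intros t; simpl; ring |].
    eapply is_RInt_scal_eq; [apply (is_RInt_chi_weight 0) | simpl; ring].
  - apply (is_RInt_ext_eq (fun t => sum_f_R0 (fun k => a k * chi k t) m * weight t
                                  + a (S m) * (chi (S m) t * weight t)));
      [intros t; simpl; ring |].
    eapply is_RInt_plus_eq; [apply IH | |].
    + eapply is_RInt_scal_eq; [apply (is_RInt_chi_weight (S m)) | reflexivity].
    + simpl; ring.
Qed.

Lemma is_RInt_power_weight (b : nat -> nat -> Z) (hb : is_char_decomp b) (n : nat) :
  is_RInt (fun t => Xfun t ^ n * weight t) 0 PI (PI * IZR (b n 0%nat)).
Proof.
  apply (is_RInt_ext_eq (fun t => sum_f_R0 (fun k => IZR (b n k) * chi k t) n * weight t)).
  - intros t; rewrite hb; reflexivity.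
  - apply is_RInt_expansion_weight.
Qed.

Definition recurrence_combination (m : nat) (x : R) : R :=
  (INR m + 3) * x ^ (S (S m)) - (INR m + 1) * (2 * x ^ (S m) + 3 * x ^ m).

Lemma derive_recurrence_antiderivative (m : nat) (x : R) :
  is_derive (fun t => Xfun t ^ (S m) * (2 * sin t - sin (2 * t))) x
            (recurrence_combination m (Xfun x) * weight x).
Proof.
  unfold Xfun, recurrence_combination, weight; auto_derive; auto.
  replace (match m with O => 1 | S _ => INR m + 1 end) with (INR m + 1)
    by (destruct m; simpl; ring).
  rewrite sin_2a, cos_2a_cos.
  pose proof (sin2_cos2 x) as Hsc; unfold Rsqr in Hsc.
  simpl pow.
  set (P := (1 + 2 * cos x) ^ m); set (s := sin x) in *; set (c := cos x) in *.
  nsatz.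
Qed.

Lemma is_RInt_recurrence_combination (m : nat) :
  is_RInt (fun t => recurrence_combination m (Xfun t) * weight t) 0 PI 0.
Proof.
  apply (is_RInt_antiderivative (fun t => Xfun t ^ (S m) * (2 * sin t - sin (2 * t)))).
  - apply derive_recurrence_antiderivative.
  - intros x; unfold Xfun, recurrence_combination, weight; auto_derive; auto.
  - rewrite !Rmult_0_r, sin_0, sin_PI, sin_2PI; ring.
Qed.

Lemma constant_coefficient_recurrence (b : nat -> nat -> Z) (hb : is_char_decomp b)
  (m : nat) :
  (INR m + 3) * IZR (b (S (S m)) 0%nat)
  = (INR m + 1) * (2 * IZR (b (S m) 0%nat) + 3 * IZR (b m 0%nat)).
Proof.
  set (B2 := IZR (b (S (S m)) 0%nat)); set (B1 := IZR (b (S m) 0%nat));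
    set (B0 := IZR (b m 0%nat)).
  assert (Hlin : is_RInt (fun t => recurrence_combination m (Xfun t) * weight t) 0 PI
                   (PI * ((INR m + 3) * B2 - (INR m + 1) * (2 * B1 + 3 * B0)))).
  { apply (is_RInt_ext_eq (fun t =>
        (INR m + 3) * (Xfun t ^ (S (S m)) * weight t)
      + - (INR m + 1) * (2 * (Xfun t ^ (S m) * weight t) + 3 * (Xfun t ^ m * weight t))));
      [intros t; unfold recurrence_combination; ring |].
    pose proof (is_RInt_power_weight b hb) as HM.
    eapply is_RInt_plus_eq;
      [eapply is_RInt_scal_eq; [apply HM | reflexivity]
      | eapply is_RInt_scal_eq;
          [eapply is_RInt_plus_eq;
             [eapply is_RInt_scal_eq; [apply HM | reflexivity]
             | eapply is_RInt_scal_eq; [apply HM | reflexivity]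
             | reflexivity]
          | reflexivity]
      | unfold B2, B1, B0; ring]. }
  assert (Hzero : PI * ((INR m + 3) * B2 - (INR m + 1) * (2 * B1 + 3 * B0)) = 0).
  { rewrite <- (is_RInt_unique (V := R_CompleteNormedModule) _ _ _ _ Hlin).
    exact (is_RInt_unique (V := R_CompleteNormedModule) _ _ _ _
             (is_RInt_recurrence_combination m)). }
  pose proof PI_RGT_0.
  apply Rmult_integral in Hzero as [HPI | Hrec]; lra.
Qed.

Theorem mainTheorem10 (b : nat -> nat -> Z) (hb : is_char_decomp b) (n : nat)
  (hn : (2 <= n)%nat) :
  ((Z.of_nat n + 1) * b n 0%nat =
   (Z.of_nat n - 1) * (2 * b (n - 1)%nat 0%nat + 3 * b (n - 2)%nat 0%nat))%Z.
Proof.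
  destruct n as [|[|m]]; [lia | lia |].
  replace (S (S m) - 1)%nat with (S m) by lia.
  replace (S (S m) - 2)%nat with m by lia.
  pose proof (constant_coefficient_recurrence b hb m) as Hrec.
  apply eq_IZR.
  rewrite !mult_IZR, !plus_IZR, !minus_IZR, !mult_IZR, <- !INR_IZR_INZ, !S_INR.
  lra.
Qed.
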